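(* For each integer $n\geq 4$, $prc(W_n)=n$, where $W_n$ is the wheel on $n+1$ vertices.
   Context: The wheel $W_n=C_n+K_1$ is the join of a cycle $C_n$ with a single vertex (adjacent to all cycle vertices). A path in an edge-coloured graph is a rainbow path if its edges receive pairwise distinct colours. The proper rainbow connection number $prc(G)$ is the minimum number of colours in a proper edge-colouring (adjacent edges get distinct colours) such that every two distinct vertices are joined by a rainbow path. *)

From mathcomp Require Import all_boot.
Set Implicit Arguments. Unset Strict Implicit. Unset Printing Implicit Defensive.

(* Graphs: vertex set a finType T, adjacency a symmetric irreflexive rel. *)

(* An edge colouring with (at most) k colours: a colour c x y : 'I_k for every
   edge xy, independent of orientation (values on non-edges are irrelevant). *)
Definition edge_colouring (T : finType) (e : rel T) (k : nat)
  (c : T -> T -> 'I_k) : Prop :=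
  forall x y, e x y -> c x y = c y x.

Definition proper_colouring (T : finType) (e : rel T) (k : nat)
  (c : T -> T -> 'I_k) : Prop :=
  forall x y z, e x y -> e x z -> y != z -> c x y != c x z.

(* x :: p is a path from x to y (distinct vertices, consecutive adjacent)
   whose edges have pairwise distinct colours. *)
Definition rainbow_path (T : finType) (e : rel T) (k : nat)
  (c : T -> T -> 'I_k) (x y : T) (p : seq T) : Prop :=
  [/\ path e x p, last x p = y, uniq (x :: p) & uniq (pairmap c x p)].

Definition rainbow_connected (T : finType) (e : rel T) (k : nat)
  (c : T -> T -> 'I_k) : Prop :=
  forall x y : T, x != y -> exists p, rainbow_path e c x y p.

Definition prc_colourable (T : finType) (e : rel T) (k : nat) : Prop :=
  exists c : T -> T -> 'I_k,
    [/\ edge_colouring e c, proper_colouring e c & rainbow_connected e c].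

Definition is_prc (T : finType) (e : rel T) (k : nat) : Prop :=
  prc_colourable e k /\ (forall k', prc_colourable e k' -> k <= k').

(* The wheel W_n = C_n + K_1: vertices option 'I_n, None is the hub,
   Some i is the i-th cycle vertex, adjacent to Some (i +- 1 mod n). *)
Definition wheel_adj (n : nat) : rel (option 'I_n) :=
  fun u v =>
    match u, v with
    | None, None => false
    | None, Some _ | Some _, None => true
    | Some i, Some j => (j == (i.+1 %% n) :> nat) || (i == (j.+1 %% n) :> nat)
    end.
Arguments wheel_adj n : clear implicits.

(* A proper edge colouring gives the n spokes at the hub distinct colours, so
   prc(W_n) >= n. Conversely the hub is adjacent to every other vertex, so any
   two vertices are joined by a path with at most two edges, and properness
   alone makes such a path rainbow; it therefore suffices to colour W_n
   properly with n colours: spoke i gets colour i and the rim edge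
   {i, i+1} gets colour i+2 (mod n). *)

From mathcomp Require Import all_boot.

Set Implicit Arguments.
Unset Strict Implicit.
Unset Printing Implicit Defensive.

Section ProperColourings.

Variables (T : finType) (e : rel T) (k : nat) (c : T -> T -> 'I_k).

Lemma proper_card_nbhd x : proper_colouring e c -> #|e x| <= k.
Proof.
move=> c_proper; rewrite -[k]card_ord; apply: (@leq_card_in _ _ (c x)).
move=> y z exy exz /eqP; apply: contraTeq => yz.
exact: c_proper.
Qed.

Lemma rainbow_path1 x y : x != y -> e x y -> rainbow_path e c x y [:: y].
Proof. by move=> xy exy; split; rewrite //= ?andbT ?inE. Qed.

Lemma rainbow_path2 x z y :
    symmetric e -> irreflexive e -> edge_colouring e c -> proper_colouring e c ->
  x != y -> e x z -> e z y -> rainbow_path e c x y [:: z; y].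
Proof.
move=> e_sym e_irr c_edge c_proper xy exz ezy.
have neq_adj u v : e u v -> u != v by apply: contraTneq => ->; rewrite e_irr.
split; rewrite //= ?exz ?ezy ?andbT ?inE //.
- by rewrite negb_or neq_adj // xy neq_adj.
- by rewrite (c_edge _ _ exz) c_proper // e_sym.
Qed.

Lemma universal_rainbow_connected u :
    symmetric e -> irreflexive e -> (forall y, y != u -> e u y) ->
    edge_colouring e c -> proper_colouring e c ->
  rainbow_connected e c.
Proof.
move=> e_sym e_irr u_univ c_edge c_proper x y xy.
have [exy | nexy] := boolP (e x y).
  by exists [:: y]; apply: rainbow_path1.
have xu : x != u.
  by apply: contraNneq _ nexy => x_u; rewrite x_u u_univ // -x_u eq_sym.
have uy : u != y by apply: contraNneq _ nexy => <-; rewrite e_sym u_univ.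
have exu : e x u by rewrite e_sym u_univ.
have euy : e u y by rewrite u_univ // eq_sym.
by exists [:: u; y]; apply: rainbow_path2.
Qed.

End ProperColourings.

Lemma prc_colourable_card_nbhd (T : finType) (e : rel T) k x :
  prc_colourable e k -> #|e x| <= k.
Proof. by case=> c [_ c_proper _]; exact: proper_card_nbhd c_proper. Qed.

Lemma val_iter_ordS n k (i : 'I_n) : val (iter k (@ordS n) i) = (i + k) %% n.
Proof.
elim: k => [|k IHk] /=; first by rewrite addn0 modn_small.
by rewrite IHk addnS -addn1 modnDml addn1.
Qed.

Lemma iter_ordS_neq n k (i : 'I_n) : 0 < k < n -> iter k (@ordS n) i != i.
Proof.
case/andP=> k_gt0 k_ltn; rewrite -(inj_eq val_inj) val_iter_ordS.
rewrite -[X in _ == X](modn_small (ltn_ord i)) -[X in _ == X %% n]addn0.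
by rewrite eqn_modDl mod0n modn_small // -lt0n.
Qed.

Lemma wheel_adj_sym n : symmetric (wheel_adj n).
Proof. by case=> [i|] [j|] //=; rewrite orbC. Qed.

Lemma wheel_adj_rim n (i j : 'I_n) :
  wheel_adj n (Some i) (Some j) = (j == ordS i) || (i == ordS j).
Proof. by []. Qed.

Lemma card_wheel_hub_nbhd n : #|wheel_adj n None| = n.
Proof.
have hub_nbhd : wheel_adj n None =i predC1 None by case.
by rewrite (eq_card hub_nbhd) cardC1 card_option card_ord.
Qed.

Section WheelColouring.

Variables (n : nat) (n_gt2 : 2 < n).

Let ordS_neq (i : 'I_n) : ordS i != i := @iter_ordS_neq _ 1 i (ltnW n_gt2).
Let ordS2_neq (i : 'I_n) : ordS (ordS i) != i := @iter_ordS_neq _ 2 i n_gt2.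

Lemma wheel_adj_irrefl : irreflexive (wheel_adj n).
Proof. by case=> [i|] //; rewrite wheel_adj_rim orbb eq_sym (negbTE (ordS_neq i)). Qed.

(* The hub is not adjacent to itself, so its colour there is arbitrary. *)
Definition wheel_colour (x y : option 'I_n) : 'I_n :=
  match x, y with
  | Some i, Some j => if j == ordS i then ordS j else ordS i
  | Some i, None | None, Some i => i
  | None, None => Ordinal (leq_trans (isT : 0 < 3) n_gt2)
  end.

Lemma wheel_colour_rim i j :
  wheel_colour (Some i) (Some j) = ordS (if j == ordS i then ordS i else i).
Proof. by rewrite /=; case: eqP => [->|]. Qed.

Lemma wheel_colour_edge : edge_colouring (wheel_adj n) wheel_colour.
Proof.
case=> [i|] [j|] //; rewrite wheel_adj_rim /=.
have [-> _ | _ /= ->] // := eqVneq j (ordS i).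
by rewrite eq_sym (negbTE (ordS2_neq i)).
Qed.

Lemma wheel_colour_proper : proper_colouring (wheel_adj n) wheel_colour.
Proof.
case=> [i|] [j|] [l|] //; rewrite ?wheel_adj_rim ?wheel_colour_rim.
- rewrite (inj_eq (@Some_inj _)) (inj_eq (@ordS_inj n)).
  have [-> | ji] := eqVneq j (ordS i); have [-> | li] := eqVneq l (ordS i).
  + by rewrite eqxx.
  + by move=> _ _ _; rewrite ordS_neq.
  + by move=> _ _ _; rewrite eq_sym ordS_neq.
  + by move=> /= /eqP-> /eqP/ordS_inj->; rewrite eqxx.
- by move=> _ _ _ /=; case: ifP => _; rewrite ?ordS_neq ?ordS2_neq.
- by move=> _ _ _ /=; case: ifP => _; rewrite eq_sym ?ordS_neq ?ordS2_neq.
Qed.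

End WheelColouring.

Lemma wheel_prc_colourable_ge n k : prc_colourable (wheel_adj n) k -> n <= k.
Proof. by move/(prc_colourable_card_nbhd None); rewrite card_wheel_hub_nbhd. Qed.

Lemma wheel_prc_colourable n : 2 < n -> prc_colourable (wheel_adj n) n.
Proof.
move=> n_gt2; have c_edge := wheel_colour_edge n_gt2.
have c_proper := wheel_colour_proper n_gt2.
exists (wheel_colour n_gt2); split => //.
apply: (universal_rainbow_connected (u := None)) => //.
- exact: wheel_adj_sym.
- exact: wheel_adj_irrefl.
- by case.
Qed.

Theorem proposition5p2 (n : nat) : 4 <= n -> is_prc (wheel_adj n) n.
Proof.
move=> n_ge4; split; first exact: wheel_prc_colourable (ltnW n_ge4).
by move=> k; apply: wheel_prc_colourable_ge.
Qed.
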